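(* Let $T=(\vec G,G,\prec,A)$ be a twisted graph, simplicial on $F$, with edge set $E=F\sqcup\{x_1,x_2,x_3\}$ where $x_1\prec x_2\prec x_3$, and let $C$ be either $(\{x_1,x_3\},\{x_2\})$ or its opposite $(\{x_2\},\{x_1,x_3\})$. Fix orderings of the rows and columns of $\Sigma(T)$. Then there is a sign $\sigma_C\in\{1,-1\}$ such that, for every $\boldsymbol\theta$ respecting $\prec$, the system of strict inequalities $\widehat a\cdot\mathbf r>0$ ($a\in A$) together with $\widehat C\cdot\mathbf r>0$, in the unknown $\mathbf r\in\mathbb{R}^E$, is soluble if and only if the sign of the determinant of the square submatrix of $\Sigma(T)$ on the columns $F\cup\{x_1\}$ equals $\sigma_C$. Moreover $\sigma_{-C}=-\sigma_C$.
   Context: Signed sets on a finite set $E$: pairs $X=(X^+,X^-)$ of disjoint subsets, $X(e)=+1,-1,0$ according as $e\in X^+$, $e\in X^-$, or neither; support $\underline X=X^+\cup X^-$; $-X=(X^-,X^+)$. Conformal: no $e$ with $X(e)=-Y(e)\ne0$; composition $(X\circ Y)(e)=X(e)$ if $X(e)\ne0$, else $Y(e)$. For a total order $<$ on $E$, $\mathcal C(<)=\{(\{e_1,e_3\},\{e_2\}),(\{e_2\},\{e_1,e_3\}):e_1<e_2<e_3\}$ (circuits of the rank 2 oriented matroid $\mathcal M(<)$; vectors are compositions of pairwise conformal families of circuits); for a partial order $\prec$, $\mathcal C(\prec)=\bigcap_{<\supseteq\prec}\mathcal C(<)$. For a directed graph $\vec G=(V,\vec E)$ (no loops, parallel or antiparallel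 edges), underlying simple graph $G=(V,E)$, a strong map $\mathcal M^*(\vec G)\to\mathcal M(<)$ means every signed minimal cut $(\{(u,w):u\in S,w\notin S\},\{(u,w):w\in S,u\notin S\})$ ($S$, $V\setminus S$ inducing connected subgraphs) is a vector of $\mathcal M(<)$; $C^*_v=(\{(u,v)\in\vec E\},\{(v,u)\in\vec E\})$. A twisted graph $T=(\vec G,G,\prec,A)$: $\prec$ a partial order on $E$, $G$ three-edge-connected, $A\subset\mathcal C(\prec)$, a strong map $\mathcal M^*(\vec G)\to\mathcal M(<)$ for every total $<\supseteq\prec$, and a partition $A=\bigsqcup_v A_v$ with members of $A_v$ pairwise conformal and composing to $C^*_v$. $\boldsymbol\theta\in\mathbb{R}^E$ respects $\prec$ if $0<\theta_e<180$ (degrees) and $\theta_e<\theta_f$ whenever $e\prec f$. For a signed set $c$ with $|\underline c|=3$ whose support elements needed below are $\prec$-comparable, $\widehat c\in\mathbb{R}^E$ has $\widehat c(e)=0$ for $e\notin\underline c$ and $\widehat c(e)=c(e)\sin(\theta_{e''}-\theta_{e'})$ if $\underline c=\{e,e',e''\}$ with $e'\prec e''$; $\Sigma(T)$ is the $|A|\times|E|$ matrix with rows $\widehat a$, $a\in A$. A matrix with $r+1$ rows and $r$ columns is a simplex if its rows have a linear dependency with all coefficients positive and every row dependency is a multiple of it. $T$ is simplicial on $F$ if for every $\boldsymbol\theta$ respecting $\prec$ the submatrix of $\Sigma(T)$ on columns $F$ is a simplex (so $|F|=|A|-1$ and the submatrix on $F\cup\{x_1\}$ is square). *)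

From HB Require Import structures.
From mathcomp Require Import all_boot all_order all_algebra.
From mathcomp Require Import reals trigo.

Set Implicit Arguments.
Unset Strict Implicit.
Unset Printing Implicit Defensive.

Import Order.TTheory GRing.Theory Num.Theory.
Local Open Scope ring_scope.

Section Twisted.
Variable E : finType.

(** Signed sets on E: pairs (X^+, X^-) (disjointness is part of each use). *)
Definition signed := ({set E} * {set E})%type.

Definition supp (X : signed) : {set E} := X.1 :|: X.2.
Definition sopp (X : signed) : signed := (X.2, X.1).
Definition szero : signed := (set0, set0).

Definition sval (R : numDomainType) (X : signed) (e : E) : R :=
  if e \in X.1 then 1 else if e \in X.2 then -1 else 0.

Definition conformal (X Y : signed) : bool :=
  [disjoint X.1 & Y.2] && [disjoint X.2 & Y.1].

Definition comp (X Y : signed) : signed :=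
  (X.1 :|: (Y.1 :\: supp X), X.2 :|: (Y.2 :\: supp X)).

Definition pairwise_conformal (s : seq signed) : Prop :=
  forall X Y, X \in s -> Y \in s -> conformal X Y.

Definition compose_seq (s : seq signed) : signed := foldr comp szero s.

Definition strict_porder (prec : rel E) : Prop :=
  irreflexive prec /\ transitive prec.

Definition total_ext (prec lt : rel E) : Prop :=
  [/\ irreflexive lt, transitive lt,
      (forall e f, e != f -> lt e f || lt f e)
    & (forall e f, prec e f -> lt e f)].

(** circuits C(<) of the rank 2 oriented matroid M(<) *)
Definition circuit_lin (lt : rel E) (X : signed) : Prop :=
  exists e1 e2 e3, [/\ lt e1 e2, lt e2 e3 &
     X = ([set e1; e3], [set e2]) \/ X = ([set e2], [set e1; e3])].

Definition circuit_po (prec : rel E) (X : signed) : Prop :=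
  forall lt, total_ext prec lt -> circuit_lin lt X.

Definition vector_lin (lt : rel E) (X : signed) : Prop :=
  exists s : seq signed,
    [/\ forall Y, Y \in s -> circuit_lin lt Y, pairwise_conformal s
      & X = compose_seq s].

Variable V : finType.

(** directed graph given by tail/head maps; no loops, no parallel or
    antiparallel edges *)
Definition digraph (tail head : E -> V) : Prop :=
  (forall e, tail e != head e) /\
  (forall e f, [set tail e; head e] = [set tail f; head f] -> e = f).

Definition adj_in (tail head : E -> V) (D : {set E}) (S : {set V}) : rel V :=
  fun u w => [&& u \in S, w \in S &
     [exists e, (e \notin D) &&
        (((tail e == u) && (head e == w)) || ((tail e == w) && (head e == u)))]].

Definition connected_in (tail head : E -> V) (D : {set E}) (S : {set V}) : Prop :=
  forall u w, u \in S -> w \in S -> connect (adj_in tail head D S) u w.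

Definition three_edge_connected (tail head : E -> V) : Prop :=
  forall D : {set E}, (#|D| <= 2)%N -> connected_in tail head D [set: V].

Definition signed_cut (tail head : E -> V) (S : {set V}) : signed :=
  ([set e | (tail e \in S) && (head e \notin S)],
   [set e | (head e \in S) && (tail e \notin S)]).

Definition minimal_cut_set (tail head : E -> V) (S : {set V}) : Prop :=
  [/\ S != set0, S != [set: V], connected_in tail head set0 S
    & connected_in tail head set0 (~: S)].

Definition strong_map (tail head : E -> V) (lt : rel E) : Prop :=
  forall S, minimal_cut_set tail head S -> vector_lin lt (signed_cut tail head S).

Definition vertex_cocircuit (tail head : E -> V) (v : V) : signed :=
  ([set e | head e == v], [set e | tail e == v]).

(** twisted graph T = (G->, G, prec, A); the partition A = \bigsqcup_v A_v is
    given by part : signed -> V with A_v = [set a in A | part a == v]. *)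
Definition twisted_graph (tail head : E -> V) (prec : rel E)
    (A : {set signed}) (part : signed -> V) : Prop :=
  [/\ digraph tail head /\ strict_porder prec,
      three_edge_connected tail head,
      (forall a, a \in A -> circuit_po prec a),
      (forall lt, total_ext prec lt -> strong_map tail head lt)
    & (forall v,
        let Av := enum [set a in A | part a == v] in
        pairwise_conformal Av /\ compose_seq Av = vertex_cocircuit tail head v)].

Variable R : realType.

(** angles in degrees *)
Definition sind (x : R) : R := sin (x * pi / 180%:R).

Definition respects (prec : rel E) (theta : E -> R) : Prop :=
  (forall e, 0 < theta e < 180%:R) /\
  (forall e f, prec e f -> theta e < theta f).

(** \hat c(e) = c(e) sin(theta_{e''} - theta_{e'}) where supp c = {e,e',e''}
    and e' prec e''; written as a sum over the ordered pairs (e',e'') of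
    elements of supp c \ {e} with e' prec e'' (exactly one such pair when
    e' and e'' are comparable). 0 outside the support. *)
Definition hat (prec : rel E) (theta : E -> R) (c : signed) (e : E) : R :=
  if e \in supp c then
    sval R c e * \sum_(f in supp c :\ e) \sum_(g in supp c :\ e | prec f g)
                   sind (theta g - theta f)
  else 0.

Definition dotE (u r : E -> R) : R := \sum_e u e * r e.

Definition simplex_on (rows : {set signed}) (F : {set E})
    (M : signed -> E -> R) : Prop :=
  #|rows| = (#|F| + 1)%N /\
  exists lam : signed -> R,
    [/\ (forall a, a \in rows -> 0 < lam a),
        (forall f, f \in F -> \sum_(a in rows) lam a * M a f = 0)
      & (forall mu : signed -> R,
          (forall f, f \in F -> \sum_(a in rows) mu a * M a f = 0) ->
          exists t : R, forall a, a \in rows -> mu a = t * lam a)].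

Definition simplicial (prec : rel E) (A : {set signed}) (F : {set E}) : Prop :=
  forall theta, respects prec theta -> simplex_on A F (hat prec theta).

Definition soluble (prec : rel E) (theta : E -> R) (A : {set signed})
    (C : signed) : Prop :=
  exists r : E -> R,
    (forall a, a \in A -> 0 < dotE (hat prec theta a) r) /\
    0 < dotE (hat prec theta C) r.

(** Given orderings sA of the rows (= A) and sE of the columns (= E) of
    Sigma(T), the square submatrix on the columns F \cup {x1}, with columns
    in the order induced by sE. *)
Definition subdet (prec : rel E) (theta : E -> R) (A : {set signed})
    (sA : seq signed) (sE : seq E) (F : {set E}) (x1 : E) : R :=
  let cols := [seq e <- sE | e \in x1 |: F] in
  \det (\matrix_(i < #|A|, j < #|A|)
          hat prec theta (nth szero sA i) (nth x1 cols j)).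

End Twisted.

(* Let lam be the positive dependency of the rows of Sigma(T) restricted to F and
   w = sum_a lam_a \hat a.  Each \hat a comes from a circuit p < q < r and is
   orthogonal to the vectors (cos theta_e)_e and (sin theta_e)_e; hence so is w,
   which moreover vanishes on F, and this forces w to be a positive multiple of
   w(x1) \hat C.  Pairing a solution r with lam then shows that the system for C is
   soluble only if w(x1) > 0.  Conversely, the matrix Sigma1 obtained from the
   columns F and a column of ones is invertible, so one can take r equal to \hat C
   off F and with all the \hat a . r equal, hence positive.  Cramer's rule gives
   det Sigma_{F + x1} = t w(x1) and det Sigma1 = t sum_a lam_a, so the sign of the
   determinant is sg(det Sigma1) sg(w(x1)).  Finally det Sigma1 never vanishes and
   depends continuously on theta, which ranges over a convex set: its sign is the
   constant sigma_C. *)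

From Pilot Require Import Defs.
From mathcomp Require Import all_boot all_order all_algebra.
From mathcomp Require Import reals trigo zify ring lra.
Set Implicit Arguments. Unset Strict Implicit. Unset Printing Implicit Defensive.
Import Order.TTheory GRing.Theory Num.Theory.

Section LinearExtension.
Variables (E : finType) (prec : rel E).
Hypothesis prec_po : strict_porder prec.

Definition upset (U : {set E}) := forall x y, prec x y -> x \in U -> y \in U.

Lemma upset0 : upset set0.
Proof. by move=> x y _; rewrite inE. Qed.

Let npred (x : E) := #|[set y | prec y x]|.
Let base := #|E|.+1.

(* Sorting by membership in U first puts U on top; counting predecessors next
   makes the order extend prec. *)
Definition upset_key (U : {set E}) (x : E) : nat :=
  (((x \in U) : nat) * base + npred x) * base + enum_rank x.

Definition upset_ext (U : {set E}) : rel E := fun x y => upset_key U x < upset_key U y.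

Lemma npred_lt_base x : npred x < base.
Proof. by rewrite ltnS max_card. Qed.

Lemma enum_rank_lt_base (x : E) : enum_rank x < base.
Proof. by rewrite ltnS ltnW // -cardE ltn_ord. Qed.

Lemma npred_mono x y : prec x y -> npred x < npred y.
Proof.
case: prec_po => irr tr pxy; apply/proper_card/properP; split.
  by apply/subsetP => z; rewrite !inE => /tr; apply.
by exists x; rewrite !inE // irr.
Qed.

Lemma upset_key_inj U : injective (upset_key U).
Proof.
move=> x y /(congr1 (modn^~ base)); rewrite !modnMDl !modn_small ?enum_rank_lt_base //.
by move/val_inj/enum_rank_inj.
Qed.

Lemma upset_ext_total U : upset U -> total_ext prec (upset_ext U).
Proof.
move=> hU; split=> [x | x y z | e f nef | e f pef]; rewrite /upset_ext.
- by rewrite ltnn.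
- exact: ltn_trans.
- by case: ltngtP => // /upset_key_inj ef; rewrite ef eqxx in nef.
have := npred_mono pef; have := npred_lt_base e; have := npred_lt_base f.
have := enum_rank_lt_base e; have := enum_rank_lt_base f.
have : ((e \in U) : nat) <= (f \in U) by case: (boolP (e \in U)) => // /(hU _ _ pef) ->.
rewrite /upset_key; nia.
Qed.

Lemma upset_ext_sep (U : {set E}) (x y : E) : x \notin U -> y \in U -> upset_ext U x y.
Proof.
move=> /negbTE hx hy; rewrite /upset_ext /upset_key hx hy.
have := npred_lt_base x; have := enum_rank_lt_base x; nia.
Qed.

Definition between (lt : rel E) p q r := (lt p q && lt q r) || (lt r q && lt q p).

Lemma upset_ext_between (U : {set E}) p q r : between (upset_ext U) p q r ->
  (q \notin U -> (p \notin U) || (r \notin U)) /\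
  (q \in U -> (p \in U) || (r \in U)).
Proof.
rewrite /between /upset_ext => hb; split=> hq; apply/contraT; rewrite negb_or ?negbK.
  case/andP=> hp hr; move: (upset_ext_sep hq hp) (upset_ext_sep hq hr).
  by rewrite /upset_ext; lia.
case/andP=> hp hr; move: (upset_ext_sep hp hq) (upset_ext_sep hr hq).
by rewrite /upset_ext; lia.
Qed.

(* The upsets "not below q" and "above q" single out the two sides of q. *)
Lemma between_of_total_ext p q r :
  (forall lt, total_ext prec lt -> between lt p q r) -> between prec p q r.
Proof.
move=> H; case: (prec_po) => irr tr.
have [npq nrq] : p != q /\ r != q.
  by move: (H _ (upset_ext_total upset0)); rewrite /between /upset_ext;
    split; apply/eqP => e; subst; lia.
set D := [set x | (x == q) || prec x q]; set U := [set x | (x == q) || prec q x].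
have upsetCD : upset (~: D).
  move=> x y pxy; rewrite !inE; apply: contra => /orP[/eqP <- | /(tr _ _ _ pxy) ->];
    by rewrite ?pxy orbT.
have upsetU : upset U.
  move=> x y pxy; rewrite !inE => /orP[/eqP xq | qx]; first by rewrite -xq pxy orbT.
  by rewrite (tr _ _ _ qx pxy) orbT.
have [below _] := upset_ext_between (H _ (upset_ext_total upsetCD)).
have [_ above] := upset_ext_between (H _ (upset_ext_total upsetU)).
move: below above; rewrite !inE !negbK eqxx (negbTE npq) (negbTE nrq) /= => /(_ isT) + /(_ isT).
rewrite /between; case/orP=> [pq | rq] /orP[qp | qr]; rewrite ?pq ?rq ?qp ?qr ?orbT //.
- by move: (tr _ _ _ pq qp); rewrite irr.
- by move: (tr _ _ _ rq qr); rewrite irr.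
Qed.

Lemma set2_eq_set2 (x y z w : E) : x != y -> [set x; y] = [set z; w] ->
  (x = z /\ y = w) \/ (x = w /\ y = z).
Proof.
move=> nxy h; have : y \in [set z; w] by rewrite -h !inE eqxx orbT.
have : x \in [set z; w] by rewrite -h !inE eqxx.
rewrite !inE => /orP[] /eqP ex /orP[] /eqP ey; subst; rewrite ?eqxx in nxy;
  by [left | right].
Qed.

Lemma circuit_poP a : circuit_po prec a ->
  exists p q r, [/\ prec p q, prec q r &
    a = ([set p; r], [set q]) \/ a = ([set q], [set p; r])].
Proof.
move=> ha.
have [p [q [r [lpq lqr shape]]]] := ha _ (upset_ext_total upset0).
have npr : p != r by apply/eqP => e; subst; move: lpq lqr; rewrite /upset_ext; lia.
have neq21 (x : E) : [set p; r] != [set x].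
  by apply/eqP => /(congr1 (fun X : {set E} => #|X|)); rewrite cards2 cards1 npr.
suff : between prec p q r.
  case/orP=> /andP[pq qr]; first by exists p, q, r.
  by exists r, q, p; split; rewrite // setUC.
apply: between_of_total_ext => lt /ha [f1 [f2 [f3 [l12 l23 shape']]]].
have same_shape : [set p; r] = [set f1; f3] -> q = f2 -> between lt p q r.
  by move/(set2_eq_set2 npr) => [] [-> ->] ->; rewrite /between l12 l23 ?orbT.
case: shape shape' => -> [] [] e1 e2.
all: by first [ exact: same_shape e1 (set1_inj e2) | exact: same_shape e2 (set1_inj e1)
         | move: (neq21 f2); rewrite ?e1 ?e2 eqxx ].
Qed.

End LinearExtension.

Local Open Scope ring_scope.

Section CircuitVector.
Variables (R : realType) (E : finType) (prec : rel E).
Hypothesis prec_po : strict_porder prec.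

Lemma prec_neq x y : prec x y -> x != y.
Proof. by case: prec_po => irr _ xy; apply: contraTneq xy => ->; rewrite irr. Qed.

Lemma sum_set2 (w : E -> R) u v : u != v -> \sum_(e in [set u; v]) w e = w u + w v.
Proof. by move=> nuv; rewrite big_setU1 ?big_set1 // inE. Qed.

Lemma sum_set3 (w : E -> R) u v x : u != v -> v != x -> u != x ->
  \sum_(e in [set u; v; x]) w e = w u + w v + w x.
Proof.
move=> nuv nvx nux; have xuv : x \notin [set u; v].
  by rewrite !inE negb_or ![x == _]eq_sym nux nvx.
by rewrite setUC big_setU1 //= sum_set2 // addrC.
Qed.

Lemma sum_supp3 (w : E -> R) u v x : u != v -> v != x -> u != x ->
  (forall e, e \notin [set u; v; x] -> w e = 0) -> \sum_e w e = w u + w v + w x.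
Proof.
move=> nuv nvx nux w0; rewrite (bigID (mem [set u; v; x])) /= -sum_set3 //.
by rewrite [X in _ + X]big1 ?addr0.
Qed.

Lemma sum_pair_prec (w : E -> E -> R) u v : u != v ->
  \sum_(f in [set u; v]) \sum_(g in [set u; v] | prec f g) w f g =
  (if prec u v then w u v else 0) + (if prec v u then w v u else 0).
Proof.
case: prec_po => irr _ nuv; rewrite sum_set2 // !big_mkcondr /= !sum_set2 // !irr.
by rewrite add0r addr0.
Qed.

Definition circuit_vec (theta : E -> R) p q r e : R :=
  (e == p)%:R * sind (theta r - theta q) - (e == q)%:R * sind (theta r - theta p)
  + (e == r)%:R * sind (theta q - theta p).

Lemma hat_circuit (theta : E -> R) p q r e : prec p q -> prec q r ->
  hat prec theta ([set p; r], [set q]) e = circuit_vec theta p q r e.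
Proof.
case: prec_po => irr tr pq qr; have pr := tr _ _ _ pq qr.
have asym x y : prec x y -> prec y x = false.
  by move=> xy; apply/negbTE/negP => /(tr _ _ _ xy); rewrite irr.
have npq := prec_neq pq; have nqr := prec_neq qr; have npr := prec_neq pr.
have neqF := (negbTE npq, negbTE nqr, negbTE npr,
              etrans (eq_sym q p) (negbTE npq), etrans (eq_sym r q) (negbTE nqr),
              etrans (eq_sym r p) (negbTE npr)).
have suppE : supp ([set p; r], [set q]) = [set p; q; r].
  by apply/setP => x; rewrite !inE orbAC.
rewrite /hat suppE /circuit_vec /Defs.sval /= !inE.
case: (eqVneq e p) => [-> | ep] /=.
  rewrite -setUA setU1K ?sum_pair_prec ?qr ?(asym _ _ qr) ?inE ?negb_or ?neqF //.
  by rewrite !mul0r; ring.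
case: (eqVneq e q) => [-> | eq] /=.
  rewrite -setUA setUCA setU1K ?sum_pair_prec ?pr ?(asym _ _ pr) ?inE ?negb_or ?neqF //.
  by rewrite !mul0r; ring.
case: (eqVneq e r) => [-> | er] /=.
  rewrite setUC setU1K ?sum_pair_prec ?pq ?(asym _ _ pq) ?inE ?negb_or ?neqF //.
  by rewrite !mul0r; ring.
by rewrite !mul0r subrr addr0.
Qed.

Lemma hat_sopp (theta : E -> R) (X : signed E) e : [disjoint X.1 & X.2] ->
  hat prec theta (sopp X) e = - hat prec theta X e.
Proof.
move=> dis; rewrite /hat /supp /sopp /Defs.sval /= setUC.
case: ifP => _; last by rewrite oppr0.
case: (boolP (e \in X.2)) => e2; case: (boolP (e \in X.1)) => e1.
- by move: (disjointFr dis e1); rewrite e2.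
all: by rewrite ?mulNr ?opprK ?mul0r ?oppr0 ?mul1r.
Qed.

Lemma sum_delta (w : E -> R) p : \sum_e (e == p)%:R * w e = w p.
Proof.
rewrite (bigD1 p) //= eqxx mul1r big1 ?addr0 // => e /negbTE ->.
by rewrite mul0r.
Qed.

Lemma circuit_vec_dot theta p q r (g : E -> R) :
  \sum_e circuit_vec theta p q r e * g e =
  sind (theta r - theta q) * g p - sind (theta r - theta p) * g q
  + sind (theta q - theta p) * g r.
Proof.
under eq_bigr do rewrite /circuit_vec mulrDl mulrBl -!mulrA.
by rewrite big_split sumrB /= !sum_delta.
Qed.

Definition radian (theta : E -> R) e := theta e * pi / 180%:R.

Lemma sind_radian (theta : E -> R) f g :
  sind (theta g - theta f) = sin (radian theta g - radian theta f).
Proof. by rewrite /sind /radian -!mulrA mulrBl. Qed.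

Lemma circuit_vec_cos theta p q r :
  \sum_e circuit_vec theta p q r e * cos (radian theta e) = 0.
Proof. by rewrite circuit_vec_dot !sind_radian !sinB; ring. Qed.

Lemma circuit_vec_sin theta p q r :
  \sum_e circuit_vec theta p q r e * sin (radian theta e) = 0.
Proof. by rewrite circuit_vec_dot !sind_radian !sinB; ring. Qed.

Lemma hat_orthogonal (theta : E -> R) a (g : E -> R) : circuit_po prec a ->
  (forall p q r, \sum_e circuit_vec theta p q r e * g e = 0) ->
  \sum_e hat prec theta a e * g e = 0.
Proof.
move=> /(circuit_poP prec_po) [p [q [r [pq qr [-> | ->]]]]] g_orth.
  by under eq_bigr do rewrite hat_circuit //; apply: g_orth.
have dis : [disjoint [set p; r] & [set q]].
  rewrite disjoints_subset; apply/subsetP => x; rewrite !inE.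
  by case/orP => /eqP ->; [exact: prec_neq pq | rewrite eq_sym; exact: prec_neq qr].
under eq_bigr do rewrite (hat_sopp _ (X := ([set p; r], [set q]))) // hat_circuit // mulNr.
by rewrite sumrN g_orth oppr0.
Qed.

(* That is, w is proportional to \hat C for C = ({x1, x3}, {x2}). *)
Lemma supp3_orthogonal theta (w : E -> R) x1 x2 x3 :
  x1 != x2 -> x2 != x3 -> x1 != x3 ->
  (forall e, e \notin [set x1; x2; x3] -> w e = 0) ->
  \sum_e w e * cos (radian theta e) = 0 -> \sum_e w e * sin (radian theta e) = 0 ->
  sind (theta x3 - theta x2) * w x2 = - sind (theta x3 - theta x1) * w x1 /\
  sind (theta x3 - theta x2) * w x3 = sind (theta x2 - theta x1) * w x1.
Proof.
move=> n12 n23 n13 w0.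
rewrite !(sum_supp3 n12 n23 n13) => [hc hs|e /w0->|e /w0->]; rewrite ?mul0r //.
rewrite !sind_radian !sinB.
move: hc hs; set c1 := cos _; set c2 := cos _; set c3 := cos _.
set s1 := sin _; set s2 := sin _; set s3 := sin _ => hc hs.
split; apply/eqP; rewrite -subr_eq0; apply/eqP.
  transitivity (s3 * (w x1 * c1 + w x2 * c2 + w x3 * c3) -
                c3 * (w x1 * s1 + w x2 * s2 + w x3 * s3)); first by ring.
  by rewrite hc hs; ring.
transitivity (c2 * (w x1 * s1 + w x2 * s2 + w x3 * s3) -
              s2 * (w x1 * c1 + w x2 * c2 + w x3 * c3)); first by ring.
by rewrite hc hs; ring.
Qed.

End CircuitVector.

Lemma sum_nth_delta (R : pzSemiRingType) (T : eqType) (x0 : T) (s : seq T) m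
    (c : 'I_m -> R) (i : 'I_m) :
  uniq s -> size s = m -> \sum_(j < m) (nth x0 s j == nth x0 s i)%:R * c j = c i.
Proof.
move=> us sz; rewrite (bigD1 i) //= eqxx mul1r big1 ?addr0 // => j nji.
by rewrite nth_uniq ?sz // (negbTE nji : (j : nat) == i = false) mul0r.
Qed.

Lemma psumr_gt0 (R : numDomainType) (T : finType) (S : {set T}) (f : T -> R) :
  S != set0 -> (forall x, x \in S -> 0 < f x) -> 0 < \sum_(x in S) f x.
Proof.
case/set0Pn => x0 x0S f_pos; rewrite (bigD1 x0) //= ltr_pwDl ?f_pos //.
by apply: sumr_ge0 => x /andP[xS _]; exact/ltW/f_pos.
Qed.

Section SimplexMatrix.
Variables (R : realType) (E : finType) (prec : rel E) (A : {set signed E})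
  (F : {set E}) (x1 : E) (sA : seq (signed E)) (sE : seq E).
Hypotheses (sA_perm : perm_eq sA (enum A)) (sE_perm : perm_eq sE (enum E))
  (x1F : x1 \notin F) (cardA : #|A| = (#|F| + 1)%N).

Local Notation n := #|A|.
Local Notation row i := (nth (szero E) sA i).

Definition cols := [seq e <- sE | e \in x1 |: F].
Local Notation col j := (nth x1 cols j).

Lemma size_sA : size sA = n.
Proof. by rewrite (perm_size sA_perm) -cardE. Qed.

Lemma uniq_sA : uniq sA.
Proof. by rewrite (perm_uniq sA_perm) enum_uniq. Qed.

Lemma mem_cols e : (e \in cols) = (e \in x1 |: F).
Proof. by rewrite mem_filter (perm_mem sE_perm) mem_enum andbT. Qed.

Lemma uniq_cols : uniq cols.
Proof. by rewrite filter_uniq // (perm_uniq sE_perm) enum_uniq. Qed.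

Lemma perm_cols : perm_eq cols (enum (x1 |: F)).
Proof.
by apply: uniq_perm; rewrite ?uniq_cols ?enum_uniq // => e; rewrite mem_cols mem_enum.
Qed.

Lemma size_cols : size cols = n.
Proof. by rewrite (perm_size perm_cols) -cardE cardsU1 x1F cardA addnC. Qed.

Lemma sum_rows (G : signed E -> R) : \sum_(a in A) G a = \sum_(i < n) G (row i).
Proof.
by rewrite -big_enum -(perm_big _ sA_perm) (big_nth (szero E)) size_sA big_mkord.
Qed.

Lemma sum_cols (H : E -> R) : \sum_(j < n) H (col j) = H x1 + \sum_(e in F) H e.
Proof.
rewrite -big_setU1 //=; symmetry.
by rewrite -big_enum -(perm_big _ perm_cols) (big_nth x1) size_cols big_mkord.
Qed.

Lemma row_in_A (i : 'I_n) : row i \in A.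
Proof. by rewrite -mem_enum -(perm_mem sA_perm) mem_nth ?size_sA. Qed.

Lemma index_x1_lt : (index x1 cols < n)%N.
Proof. by rewrite -size_cols index_mem mem_cols setU11. Qed.

Definition jx1 : 'I_n := Ordinal index_x1_lt.

Lemma col_jx1 : col jx1 = x1.
Proof. by rewrite nth_index // mem_cols setU11. Qed.

Lemma col_eq_x1 (j : 'I_n) : (col j == x1) = (j == jx1).
Proof. by rewrite -{2}col_jx1 nth_uniq ?size_cols ?uniq_cols. Qed.

Lemma col_of_F f : f \in F -> exists2 j : 'I_n, col j = f & j != jx1.
Proof.
move=> fF; have fc : f \in cols by rewrite mem_cols setU1r.
have lt : (index f cols < n)%N by rewrite -size_cols index_mem.
exists (Ordinal lt); first by rewrite nth_index.
by rewrite -col_eq_x1 nth_index //; apply: contraTneq fF => ->.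
Qed.

Lemma row_of_A a : a \in A -> exists i : 'I_n, row i = a.
Proof.
move=> aA; have : a \in sA by rewrite (perm_mem sA_perm) mem_enum.
rewrite -index_mem size_sA => lt.
by exists (Ordinal lt); rewrite nth_index // -index_mem size_sA.
Qed.

Definition Sigma (theta : E -> R) : 'M[R]_n :=
  \matrix_(i, j) hat prec theta (row i) (col j).

Definition Sigma1 (theta : E -> R) : 'M[R]_n :=
  \matrix_(i, j) if col j == x1 then 1 else hat prec theta (row i) (col j).

Lemma subdetE theta : subdet prec theta A sA sE F x1 = \det (Sigma theta).
Proof. by []. Qed.

Definition weight (theta : E -> R) (lam : signed E -> R) e :=
  \sum_(a in A) lam a * hat prec theta a e.

Lemma weight_dot theta lam (r : E -> R) :
  \sum_(a in A) lam a * dotE (hat prec theta a) r = dotE (weight theta lam) r.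
Proof.
rewrite /dotE /weight; under eq_bigr do rewrite big_distrr /=.
rewrite exchange_big /=; apply: eq_bigr => e _; rewrite big_distrl /=.
by apply: eq_bigr => a _; rewrite mulrA.
Qed.

Lemma adj_row_mul (M : 'M[R]_n) j : \sum_i \adj M jx1 i * M i j = (jx1 == j)%:R * \det M.
Proof.
by have := congr1 (fun X : 'M[R]_n => X jx1 j) (mul_adj_mx M); rewrite !mxE mulr_natl.
Qed.

Lemma adj_Sigma1 theta i : \adj (Sigma1 theta) jx1 i = \adj (Sigma theta) jx1 i.
Proof.
rewrite !mxE /cofactor; congr (_ * \det _); apply/matrixP => k l; rewrite !mxE.
by rewrite col_eq_x1 eq_sym (negbTE (neq_lift jx1 l)).
Qed.

Lemma A_neq0 : A != set0.
Proof. by rewrite -card_gt0 cardA addn1. Qed.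

Variables (theta : E -> R) (lam : signed E -> R).
Hypotheses (lam_pos : forall a, a \in A -> 0 < lam a)
  (lam_dep : forall f, f \in F -> \sum_(a in A) lam a * hat prec theta a f = 0)
  (lam_unique : forall mu : signed E -> R,
     (forall f, f \in F -> \sum_(a in A) mu a * hat prec theta a f = 0) ->
     exists t : R, forall a, a \in A -> mu a = t * lam a).

Lemma sum_lam_gt0 : 0 < \sum_(a in A) lam a.
Proof. exact: psumr_gt0 A_neq0 lam_pos. Qed.

Lemma weight_dot_gt0 (r : E -> R) :
  (forall a, a \in A -> 0 < dotE (hat prec theta a) r) -> 0 < dotE (weight theta lam) r.
Proof.
move=> rows_pos; rewrite -weight_dot psumr_gt0 ?A_neq0 // => a aA.
by rewrite mulr_gt0 ?lam_pos ?rows_pos.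
Qed.

Lemma row_dependency (c : 'I_n -> R) :
  (forall f, f \in F -> \sum_i c i * hat prec theta (row i) f = 0) ->
  exists t, forall i, c i = t * lam (row i).
Proof.
move=> c_dep; pose mu a := \sum_(i < n) (row i == a)%:R * c i.
have muE (i : 'I_n) : mu (row i) = c i by rewrite /mu sum_nth_delta ?uniq_sA ?size_sA.
have [|t ht] := lam_unique (mu := mu).
  by move=> f fF; rewrite sum_rows; under eq_bigr do rewrite muE; exact: c_dep.
by exists t => i; rewrite -muE ht ?row_in_A.
Qed.

(* Cramer's rule along the row of the adjugate indexed by x1. *)
Lemma det_Sigma_factor : exists t, \det (Sigma theta) = t * weight theta lam x1 /\
  \det (Sigma1 theta) = t * \sum_(a in A) lam a.
Proof.
pose c i := \adj (Sigma theta) jx1 i.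
have [|t ht] := @row_dependency c.
  move=> f /col_of_F [j <- nj].
  transitivity (\sum_i \adj (Sigma theta) jx1 i * Sigma theta i j).
    by apply: eq_bigr => i _; rewrite [Sigma _ i j]mxE.
  by rewrite adj_row_mul eq_sym (negbTE nj) mul0r.
exists t; split.
  have := adj_row_mul (Sigma theta) jx1; rewrite eqxx mul1r => <-.
  rewrite /weight sum_rows big_distrr.
  by apply: eq_bigr => i _; rewrite -/(c i) ht mxE col_jx1 -mulrA.
have := adj_row_mul (Sigma1 theta) jx1; rewrite eqxx mul1r => <-.
rewrite sum_rows big_distrr.
by apply: eq_bigr => i _; rewrite adj_Sigma1 -/(c i) ht mxE col_jx1 eqxx mulr1.
Qed.

Lemma det_Sigma1_neq0 : \det (Sigma1 theta) != 0.
Proof.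
apply/negP => /det0P [v /negP nv vS].
have v_col (j : 'I_n) : \sum_i v 0 i * Sigma1 theta i j = 0.
  by have := congr1 (fun X : 'rV[R]_n => X 0 j) vS; rewrite !mxE.
have [|t ht] := @row_dependency (v 0).
  move=> f /col_of_F [j <- nj]; rewrite -[RHS](v_col j).
  by apply: eq_bigr => i _; rewrite mxE col_eq_x1 (negbTE nj).
have /eqP : t * \sum_(a in A) lam a = 0.
  rewrite -[RHS](v_col jx1) sum_rows big_distrr; apply: eq_bigr => i _.
  by rewrite ht mxE col_jx1 eqxx mulr1.
rewrite mulf_eq0 (gt_eqF sum_lam_gt0) orbF => /eqP t0.
by apply: nv; apply/eqP/rowP => i; rewrite ht t0 mul0r mxE.
Qed.

Lemma sgr_det_Sigma : Num.sg (\det (Sigma theta)) =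
  Num.sg (\det (Sigma1 theta)) * Num.sg (weight theta lam x1).
Proof.
have [t [-> ->]] := det_Sigma_factor.
by rewrite !sgrM (gtr0_sg sum_lam_gt0) mulr1.
Qed.

(* Solve Sigma1 z = -(\hat a . rho)_a and correct rho on F by z; the entry of z
   at the column of ones is then minus the common value of the \hat a . r. *)
Lemma exists_rows_const (rho : E -> R) : exists2 r : E -> R,
  (forall e, e \notin F -> r e = rho e) &
  exists k, forall a, a \in A -> dotE (hat prec theta a) r = k.
Proof.
have S1unit : Sigma1 theta \in unitmx by rewrite unitmxE unitfE det_Sigma1_neq0.
pose d : 'cV[R]_n := \col_i dotE (hat prec theta (row i)) rho.
pose z := invmx (Sigma1 theta) *m (- d).
pose zE e := \sum_(j < n) (col j == e)%:R * z j 0.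
have zEcol (j : 'I_n) : zE (col j) = z j 0 by rewrite /zE sum_nth_delta ?uniq_cols ?size_cols.
exists (fun e => rho e + (e \in F)%:R * zE e) => [e /negbTE -> | ].
  by rewrite mul0r addr0.
exists (- zE x1) => a /row_of_A [i <-].
have := congr1 (fun X : 'cV[R]_n => X i 0) (mulKVmx S1unit (- d)); rewrite !mxE.
under eq_bigr do rewrite mxE -zEcol.
rewrite (sum_cols (fun e => (if e == x1 then 1 else hat prec theta (row i) e) * zE e)).
rewrite eqxx mul1r => zrow.
have sumF1 : \sum_(e in F) (if e == x1 then 1 else hat prec theta (row i) e) * zE e =
             \sum_(e in F) hat prec theta (row i) e * zE e.
  by apply: eq_bigr => e eF; rewrite ifN //; apply: contraTneq eF => ->.
have sumF : \sum_e hat prec theta (row i) e * ((e \in F)%:R * zE e) =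
            \sum_(e in F) hat prec theta (row i) e * zE e.
  rewrite [RHS]big_mkcond; apply: eq_bigr => e _.
  by case: (e \in F); rewrite ?mul1r ?mul0r ?mulr0.
rewrite sumF1 /dotE in zrow; rewrite /dotE /=.
under eq_bigr do rewrite mulrDr.
rewrite big_split /= sumF; lra.
Qed.

Lemma soluble_of_weight (rho : E -> R) :
  (forall e, e \in F -> rho e = 0) -> 0 < dotE (weight theta lam) rho ->
  exists2 r : E -> R, (forall e, e \notin F -> r e = rho e) &
    (forall a, a \in A -> 0 < dotE (hat prec theta a) r).
Proof.
move=> rhoF wpos; have [r rE [k rk]] := exists_rows_const rho.
exists r => // a aA; rewrite rk //.
have wr : dotE (weight theta lam) r = dotE (weight theta lam) rho.
  apply: eq_bigr => e _; case: (boolP (e \in F)) => eF; last by rewrite rE.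
  by rewrite /weight lam_dep // !mul0r.
move: wpos; rewrite -wr -weight_dot.
under eq_bigr => b bA do rewrite rk //.
by rewrite -big_distrl /= pmulr_rgt0 // sum_lam_gt0.
Qed.

End SimplexMatrix.

Lemma sind_gt0 (R : realType) (x : R) : 0 < x < 180%:R -> 0 < sind x.
Proof.
move=> /andP[x0 x180]; apply: sin_gt0_pi; apply/andP; split.
  by rewrite divr_gt0 ?mulr_gt0 ?pi_gt0 ?ltr0n.
by rewrite ltr_pdivrMr ?ltr0n // mulrC ltr_pM2l ?pi_gt0.
Qed.

Lemma respects_sind_gt0 (R : realType) (E : finType) (prec : rel E) (theta : E -> R) e f :
  respects prec theta -> prec e f -> 0 < sind (theta f - theta e).
Proof.
case=> bounds mono ef; apply: sind_gt0; rewrite subr_gt0 mono //=.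
by move: (bounds e) (bounds f) => /andP[e0 _] /andP[_ f180]; lra.
Qed.

Lemma dotEZl (R : realType) (E : finType) (s : R) (u r : E -> R) :
  dotE (fun e => s * u e) r = s * dotE u r.
Proof. by rewrite /dotE big_distrr; apply: eq_bigr => e _ /=; rewrite mulrA. Qed.

Lemma dotEZr (R : realType) (E : finType) (s : R) (u r : E -> R) :
  dotE u (fun e => s * r e) = s * dotE u r.
Proof. by rewrite /dotE big_distrr; apply: eq_bigr => e _ /=; rewrite mulrCA. Qed.

Section SolubilityCriterion.
Variables (R : realType) (E : finType) (prec : rel E) (A : {set signed E})
  (F : {set E}) (x1 x2 x3 : E).
Hypotheses (prec_po : strict_porder prec)
  (A_circuits : forall a, a \in A -> circuit_po prec a)
  (x1F : x1 \notin F) (x2F : x2 \notin F) (x3F : x3 \notin F)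
  (n12 : x1 != x2) (n23 : x2 != x3) (n13 : x1 != x3)
  (E_cover : F :|: [set x1; x2; x3] = [set: E]) (p23 : prec x2 x3).

Lemma in_F_of_notin3 e : e \notin [set x1; x2; x3] -> e \in F.
Proof. by have := in_setT e; rewrite -E_cover inE => /orP[] // ->. Qed.

Lemma circuit_vec_F (theta : E -> R) e : e \in F -> circuit_vec theta x1 x2 x3 e = 0.
Proof.
move=> eF; have [e1 e2 e3] : [/\ e != x1, e != x2 & e != x3].
  by split; apply: contraTneq eF => ->.
by rewrite /circuit_vec (negbTE e1) (negbTE e2) (negbTE e3) !mul0r subrr addr0.
Qed.

Variables (sA : seq (signed E)) (sE : seq E) (theta : E -> R) (lam : signed E -> R).
Hypotheses (sA_perm : perm_eq sA (enum A)) (sE_perm : perm_eq sE (enum E))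
  (cardA : #|A| = (#|F| + 1)%N) (theta_resp : respects prec theta)
  (lam_pos : forall a, a \in A -> 0 < lam a)
  (lam_dep : forall f, f \in F -> \sum_(a in A) lam a * hat prec theta a f = 0)
  (lam_unique : forall mu : signed E -> R,
     (forall f, f \in F -> \sum_(a in A) mu a * hat prec theta a f = 0) ->
     exists t : R, forall a, a \in A -> mu a = t * lam a).

Local Notation w := (weight prec A theta lam).
Local Notation K := (circuit_vec theta x1 x2 x3).
Local Notation k1 := (sind (theta x3 - theta x2)).

(* w vanishes on F, and is orthogonal to (cos theta_e) and (sin theta_e) because
   every row is. *)
Lemma weight_circuit_vec e : k1 * w e = w x1 * K e.
Proof.
have w0 e' : e' \notin [set x1; x2; x3] -> w e' = 0.
  by move/in_F_of_notin3; apply: lam_dep.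
have w_orth g : (forall p q r, \sum_e circuit_vec theta p q r e * g e = 0) ->
    \sum_e w e * g e = 0.
  move=> g_orth; rewrite -/(dotE w g) -weight_dot big1 // => a aA.
  by rewrite /dotE (hat_orthogonal prec_po (A_circuits aA) g_orth) mulr0.
have [r2 r3] := supp3_orthogonal n12 n23 n13 w0 (w_orth _ (circuit_vec_cos theta))
  (w_orth _ (circuit_vec_sin theta)).
have neqF := (negbTE n12, negbTE n23, negbTE n13, etrans (eq_sym x2 x1) (negbTE n12),
  etrans (eq_sym x3 x2) (negbTE n23), etrans (eq_sym x3 x1) (negbTE n13)).
rewrite /circuit_vec.
case: (eqVneq e x1) => [-> | e1]; first by rewrite ?neqF mulr1n !mul0r; ring.
case: (eqVneq e x2) => [-> | e2]; first by rewrite ?neqF mulr1n !mul0r r2; ring.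
case: (eqVneq e x3) => [-> | e3]; first by rewrite ?neqF mulr1n !mul0r r3; ring.
have e_out : e \notin [set x1; x2; x3] by rewrite !inE !negb_or e1 e2 e3.
by rewrite w0 // !mul0r subrr addr0 !mulr0.
Qed.

Lemma soluble_iff_weight (C : signed E) (s : R) : s * s = 1 ->
  (forall e, hat prec theta C e = s * K e) ->
  soluble prec theta A C <-> 0 < s * w x1.
Proof.
move=> s2 hatC; have k1_pos : 0 < k1 := respects_sind_gt0 theta_resp p23.
have dotC r : dotE (hat prec theta C) r = s * dotE K r.
  by rewrite -dotEZl; apply: eq_bigr => e _; rewrite hatC.
have dotw r : k1 * dotE w r = w x1 * dotE K r.
  rewrite /dotE !big_distrr; apply: eq_bigr => e _ /=.
  by rewrite mulrA weight_circuit_vec -mulrA.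
have K1 : K x1 = k1.
  by rewrite /circuit_vec eqxx (negbTE n12) (negbTE n13) mulr1n mul1r !mul0r subr0 addr0.
have K_norm : 0 < dotE K K.
  rewrite /dotE (bigD1 x1) //= K1 ltr_pwDl ?mulr_gt0 //.
  by apply: sumr_ge0 => e _; rewrite -expr2 sqr_ge0.
split.
  case=> r [rows_pos C_pos].
  have := weight_dot_gt0 cardA lam_pos rows_pos; rewrite -(pmulr_rgt0 _ k1_pos) dotw => wK_pos.
  rewrite dotC in C_pos; rewrite -(pmulr_lgt0 _ C_pos).
  have -> : s * w x1 * (s * dotE K r) = s * s * (w x1 * dotE K r) by ring.
  by rewrite s2 mul1r.
move=> sw_pos; pose rho e := s * K e.
have rhoF e : e \in F -> rho e = 0 by move=> eF; rewrite /rho circuit_vec_F ?mulr0.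
have [|r rE rows_pos] :=
  soluble_of_weight sA_perm sE_perm x1F cardA lam_pos lam_dep lam_unique rhoF.
  by rewrite -(pmulr_rgt0 _ k1_pos) /rho dotEZr mulrCA dotw mulrA mulr_gt0.
exists r; split => //; rewrite dotC.
have -> : dotE K r = dotE K rho.
  apply: eq_bigr => e _; case: (boolP (e \in F)) => eF; last by rewrite rE.
  by rewrite circuit_vec_F // !mul0r.
by rewrite /rho dotEZr mulrA s2 mul1r.
Qed.

End SolubilityCriterion.

Section SignCriterion.
Variables (R : realType) (E : finType) (prec : rel E) (A : {set signed E})
  (F : {set E}) (x1 x2 x3 : E) (sA : seq (signed E)) (sE : seq E).
Hypotheses (prec_po : strict_porder prec)
  (A_circuits : forall a, a \in A -> circuit_po prec a)
  (A_simplicial : simplicial R prec A F)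
  (x1F : x1 \notin F) (x2F : x2 \notin F) (x3F : x3 \notin F)
  (n12 : x1 != x2) (n23 : x2 != x3) (n13 : x1 != x3)
  (E_cover : F :|: [set x1; x2; x3] = [set: E])
  (p12 : prec x1 x2) (p23 : prec x2 x3)
  (sA_perm : perm_eq sA (enum A)) (sE_perm : perm_eq sE (enum E)).

Local Notation C0 := ([set x1; x3], [set x2]).

Lemma respects_det_Sigma1_neq0 :
  forall theta : E -> R, respects prec theta -> \det (Sigma1 prec A F x1 sA sE theta) != 0.
Proof.
move=> theta /A_simplicial [cardA [lam [lam_pos _ lam_unique]]].
exact: (det_Sigma1_neq0 sA_perm sE_perm x1F cardA lam_pos lam_unique).
Qed.

Lemma soluble_sign (theta : E -> R) : respects prec theta -> exists w : R,
  [/\ Num.sg (subdet prec theta A sA sE F x1) =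
        Num.sg (\det (Sigma1 prec A F x1 sA sE theta)) * Num.sg w,
      soluble prec theta A C0 <-> 0 < w &
      soluble prec theta A (sopp C0) <-> w < 0].
Proof.
move=> theta_resp; have [cardA [lam [lam_pos lam_dep lam_unique]]] := A_simplicial theta_resp.
have hatC e : hat prec theta C0 e = 1 * circuit_vec theta x1 x2 x3 e.
  by rewrite mul1r hat_circuit.
have C0_dis : [disjoint C0.1 & C0.2].
  rewrite disjoints_subset; apply/subsetP => x; rewrite !inE.
  by case/orP => /eqP ->; [exact: n12 | rewrite eq_sym].
have hatCo e : hat prec theta (sopp C0) e = -1 * circuit_vec theta x1 x2 x3 e.
  by rewrite hat_sopp // hat_circuit // mulN1r.
have crit := soluble_iff_weight prec_po A_circuits x1F x2F x3F n12 n23 n13 E_cover p23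
  sA_perm sE_perm cardA theta_resp lam_pos lam_dep lam_unique.
exists (weight prec A theta lam x1); split.
- by rewrite subdetE (sgr_det_Sigma sA_perm sE_perm x1F cardA lam_pos lam_unique).
- by have := crit C0 1 (mulr1 1) hatC; rewrite mul1r.
- by have := crit (sopp C0) (-1) (etrans (mulrNN 1 1) (mulr1 1)) hatCo; rewrite mulN1r oppr_gt0.
Qed.

End SignCriterion.

From mathcomp Require Import boolp classical_sets topology normedtype.
Import numFieldNormedType.Exports.

Section Continuity.
Variable R : realType.
Implicit Types f g : R -> R.

Lemma continuous_add f g : continuous f -> continuous g -> continuous (fun u => f u + g u).
Proof. by move=> fc gc u; apply: continuousD; [exact: fc | exact: gc]. Qed.

Lemma continuous_mul f g : continuous f -> continuous g -> continuous (fun u => f u * g u).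
Proof. by move=> fc gc u; apply: continuousM; [exact: fc | exact: gc]. Qed.

Lemma continuous_sin_comp f : continuous f -> continuous (fun u => sin (f u)).
Proof. by move=> fc u; apply: (continuous_comp (fc u)); exact: continuous_sin. Qed.

Lemma continuous_bigsum (I : Type) (r : seq I) (P : pred I) (f : I -> R -> R) :
  (forall i, continuous (f i)) -> continuous (fun u => \sum_(i <- r | P i) f i u).
Proof.
move=> fc; elim: r => [|i r IH].
  by under eq_fun do rewrite big_nil; exact: cst_continuous.
under eq_fun do rewrite big_cons.
by case: (P i) => // u; apply: continuousD; [exact: fc | exact: IH].
Qed.

Lemma continuous_bigprod (I : Type) (r : seq I) (P : pred I) (f : I -> R -> R) :
  (forall i, continuous (f i)) -> continuous (fun u => \prod_(i <- r | P i) f i u).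
Proof.
move=> fc; elim: r => [|i r IH].
  by under eq_fun do rewrite big_nil; exact: cst_continuous.
under eq_fun do rewrite big_cons.
by case: (P i) => //; apply: continuous_mul.
Qed.

Lemma continuous_det n (M : 'I_n -> 'I_n -> R -> R) :
  (forall i j, continuous (M i j)) -> continuous (fun u => \det (\matrix_(i, j) M i j u)).
Proof.
move=> Mc; rewrite /determinant; apply: continuous_bigsum => s.
apply: continuous_mul; first exact: cst_continuous.
under eq_fun do under eq_bigr do rewrite mxE.
exact: continuous_bigprod.
Qed.

Lemma sgr_continuous_nonvanishing f : continuous f ->
  (forall u, 0 <= u <= 1 -> f u != 0) -> Num.sg (f 1) = Num.sg (f 0).
Proof.
move=> fc f0; apply/eqP/negPn/negP => sg_ne.
have [c c01 fc0] : exists2 c, c \in `[0, 1] & f c = 0.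
  apply: IVT; [exact: ler01 | exact: continuous_subspaceT |].
  have f0ne : f 0 != 0 by apply: f0; rewrite lexx ler01.
  have f1ne : f 1 != 0 by apply: f0; rewrite lexx ler01.
  move: sg_ne f0ne f1ne; rewrite ge_min le_max.
  by case: (ltrgtP (f 0) 0) => h0; case: (ltrgtP (f 1) 0) => h1;
    rewrite ?(ltr0_sg h0) ?(gtr0_sg h0) ?(ltr0_sg h1) ?(gtr0_sg h1) ?h0 ?h1 ?eqxx ?ltW.
by move: c01; rewrite in_itv /= => /f0; rewrite fc0 eqxx.
Qed.

End Continuity.

Section Segment.
Variables (R : realType) (E : finType) (prec : rel E).

Definition segment (theta0 theta : E -> R) (u : R) : E -> R :=
  fun e => theta0 e + u * (theta e - theta0 e).

Lemma continuous_affine (a b : R) : continuous (fun u : R => a + u * b).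
Proof.
apply: continuous_add; first exact: cst_continuous.
by apply: continuous_mul; [move=> v; exact: cvg_id | exact: cst_continuous].
Qed.

Lemma continuous_sind_affine (a b : R) : continuous (fun u : R => sind (a + u * b)).
Proof.
have -> : (fun u : R => sind (a + u * b)) =
          (fun u => sin (a * pi / 180%:R + u * (b * pi / 180%:R))).
  by apply/funext => u; rewrite /sind; congr sin; ring.
by apply: continuous_sin_comp; exact: continuous_affine.
Qed.

Lemma continuous_hat_segment (theta0 theta : E -> R) c e :
  continuous (fun u => hat prec (segment theta0 theta u) c e).
Proof.
rewrite /hat; case: (e \in supp c); last exact: cst_continuous.
apply: continuous_mul; first exact: cst_continuous.
apply: continuous_bigsum => f; apply: continuous_bigsum => g.
have -> : (fun u => sind (segment theta0 theta u g - segment theta0 theta u f)) =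
  (fun u => sind ((theta0 g - theta0 f) + u * ((theta g - theta0 g) - (theta f - theta0 f)))).
  by apply/funext => u; rewrite /segment; congr sind; ring.
exact: continuous_sind_affine.
Qed.

Lemma segment_gt (m a b u : R) : 0 <= u <= 1 -> m < a -> m < b -> m < a + u * (b - a).
Proof.
move=> /andP[u0 u1] ma mb; case: (lerP a b) => ab.
  by have := mulr_ge0 u0 (eqbRL (subr_ge0 a b) ab); lra.
have -> : a + u * (b - a) = b + (1 - u) * (a - b) by ring.
by have := mulr_ge0 (eqbRL (subr_ge0 u 1) u1) (eqbRL (subr_ge0 b a) (ltW ab)); lra.
Qed.

Lemma segment_lt (m a b u : R) : 0 <= u <= 1 -> a < m -> b < m -> a + u * (b - a) < m.
Proof.
move=> u01 am bm; rewrite -ltrN2.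
have -> : - (a + u * (b - a)) = - a + u * (- b - - a) by ring.
by rewrite segment_gt // ltrN2.
Qed.

Lemma respects_segment (theta0 theta : E -> R) u : 0 <= u <= 1 ->
  respects prec theta0 -> respects prec theta -> respects prec (segment theta0 theta u).
Proof.
move=> u01 [b0 m0] [b m]; split => [e | e f ef]; rewrite /segment.
  by move: (b0 e) (b e) => /andP[l0 h0] /andP[l h]; rewrite segment_gt ?segment_lt.
rewrite -subr_gt0.
have -> : theta0 f + u * (theta f - theta0 f) - (theta0 e + u * (theta e - theta0 e)) =
  (theta0 f - theta0 e) + u * ((theta f - theta e) - (theta0 f - theta0 e)) by ring.
by rewrite segment_gt // subr_gt0 ?m0 ?m.
Qed.

End Segment.

Lemma sgr_pm1 (R : realDomainType) (x : R) : x != 0 -> Num.sg x = 1 \/ Num.sg x = -1.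
Proof.
move=> nx; case: (ltrgtP x 0) => [/ltr0_sg | /gtr0_sg | x0]; [by right | by left |].
by rewrite x0 eqxx in nx.
Qed.

Lemma sgrM_sgr_eq (R : realDomainType) (d w : R) : d != 0 ->
  (Num.sg d * Num.sg w = Num.sg d <-> 0 < w) /\
  (Num.sg d * Num.sg w = - Num.sg d <-> w < 0).
Proof.
move=> /sgr_pm1 [] ->; case: (ltrgtP w 0) => [w0 | w0 | ->];
  rewrite ?(ltr0_sg w0) ?(gtr0_sg w0) ?sgr0; split; split => h; lra.
Qed.

Section SignConstant.
Variables (R : realType) (E : finType) (prec : rel E) (A : {set signed E})
  (F : {set E}) (x1 : E) (sA : seq (signed E)) (sE : seq E).

(* Follow det Sigma1 along the segment from theta0 to theta; the respecting
   vectors form a convex set. *)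
Lemma sgr_det_Sigma1_const (theta0 theta : E -> R) :
  (forall th : E -> R, respects prec th -> \det (Sigma1 prec A F x1 sA sE th) != 0) ->
  respects prec theta0 -> respects prec theta ->
  Num.sg (\det (Sigma1 prec A F x1 sA sE theta)) =
  Num.sg (\det (Sigma1 prec A F x1 sA sE theta0)).
Proof.
move=> D_neq0 resp0 resp.
pose f u := \det (Sigma1 prec A F x1 sA sE (segment theta0 theta u)).
have seg0 : segment theta0 theta 0 = theta0.
  by apply/funext => e; rewrite /segment mul0r addr0.
have seg1 : segment theta0 theta 1 = theta.
  by apply/funext => e; rewrite /segment mul1r addrC subrK.
have := @sgr_continuous_nonvanishing _ f; rewrite /f seg0 seg1; apply=> [|u u01].
  apply: continuous_det => i j.
  by case: (_ == x1); [exact: cst_continuous | exact: continuous_hat_segment].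
exact: D_neq0 (respects_segment u01 resp0 resp).
Qed.

End SignConstant.

Theorem theoremt (R : realType) (V E : finType) (tail head : E -> V)
    (prec : rel E) (A : {set signed E}) (part : signed E -> V)
    (F : {set E}) (x1 x2 x3 : E)
    (sA : seq (signed E)) (sE : seq E) :
  twisted_graph tail head prec A part ->
  simplicial R prec A F ->
  x1 \notin F -> x2 \notin F -> x3 \notin F ->
  x1 != x2 -> x2 != x3 -> x1 != x3 ->
  F :|: [set x1; x2; x3] = [set: E] ->
  prec x1 x2 -> prec x2 x3 ->
  perm_eq sA (enum A) -> perm_eq sE (enum E) ->
  let C0 : signed E := ([set x1; x3], [set x2]) in
  exists sigma : R, (sigma = 1 \/ sigma = -1) /\
    forall theta : E -> R, respects prec theta ->
      (soluble prec theta A C0 <->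
         Num.sg (subdet prec theta A sA sE F x1) = sigma) /\
      (soluble prec theta A (sopp C0) <->
         Num.sg (subdet prec theta A sA sE F x1) = - sigma).
Proof.
move=> [[_ prec_po] _ A_circuits _ _] A_simplicial x1F x2F x3F n12 n23 n13 E_cover
  p12 p23 sA_perm sE_perm C0.
have D_neq0 := respects_det_Sigma1_neq0 A_simplicial x1F sA_perm sE_perm.
have [[theta0 resp0] | no_resp] :=
  pselect (exists theta : E -> R, respects prec theta); last first.
  by exists 1; split => [|theta resp]; [left | case: no_resp; exists theta].
exists (Num.sg (\det (Sigma1 prec A F x1 sA sE theta0))).
split => [|theta resp]; first exact/sgr_pm1/D_neq0.
have [w [-> sol sol_opp]] := soluble_sign prec_po A_circuits A_simplicial x1F x2F x3F
  n12 n23 n13 E_cover p12 p23 sA_perm sE_perm resp.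
have [pos neg] := sgrM_sgr_eq w (D_neq0 _ resp).
rewrite -(sgr_det_Sigma1_const D_neq0 resp0 resp).
by split; [apply: iff_trans sol (iff_sym pos) | apply: iff_trans sol_opp (iff_sym neg)].
Qed.
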